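(* For every $x\in\mathbb{C}$ and every $p\in\mathbb{N}$ we have in $\mathcal{A}_0$ $$(a+xb)^p=\sum_{j=0}^p\gamma_j(x)\binom{p}{j}b^ja^{p-j},$$ where $\gamma_0(x)=1$ and $\gamma_j(x):=x(x+1)\cdots(x+j-1)$ for $j\ge1$.
   Context: $\mathcal{A}_0$ is the $\mathbb{C}$-algebra of polynomials in two variables $a,b$ subject to the commutation relation $ab-ba=b^2$. *)

From HB Require Import structures.
From mathcomp Require Import all_boot all_order all_algebra.
From mathcomp Require Import complex.
From mathcomp Require Import reals.
Set Implicit Arguments. Unset Strict Implicit. Unset Printing Implicit Defensive.
Import Order.TTheory GRing.Theory Num.Theory.
Local Open Scope ring_scope.

Definition gamma {K : pzRingType} (j : nat) (x : K) : K :=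
  \prod_(i < j) (x + i%:R).

(* The defining relation of the Jordan plane A_0 = C<a,b>/(ab - ba - b^2). *)
Definition jordan_rel {T : pzRingType} (a b : T) : Prop := a * b - b * a = b ^+ 2.

From HB Require Import structures.
From mathcomp Require Import all_boot all_order all_algebra.
From mathcomp Require Import complex.
From mathcomp Require Import reals.
Import Order.TTheory GRing.Theory Num.Theory.
Set Implicit Arguments. Unset Strict Implicit. Unset Printing Implicit Defensive.
Local Open Scope ring_scope.

(* The relation gives a b^j = b^j a + j b^(j+1), so left multiplication by
   a + x b sends the monomial b^j a^n to b^j a^(n+1) + (x + j) b^(j+1) a^n.
   Expanding (a + x b)^p by induction on p, the coefficient of b^j a^(p-j)
   therefore obeys the Pascal recursion weighted by the factors x + j, whose
   solution is the rising factorial gamma j x times the binomial coefficient. *)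

Lemma gammaS (K : pzRingType) (j : nat) (x : K) :
  gamma j.+1 x = gamma j x * (x + j%:R).
Proof. by rewrite /gamma big_ord_recr. Qed.

Section JordanPlane.

Variable A : pzRingType.
Variables a b : A.
Hypothesis hab : jordan_rel a b.

Lemma jordan_relE : a * b = b * a + b ^+ 2.
Proof. by rewrite -hab addrC subrK. Qed.

Lemma jordan_mul_expr (j : nat) : a * b ^+ j = b ^+ j * a + b ^+ j.+1 *+ j.
Proof.
elim: j => [|j IHj]; first by rewrite expr0 mulr1 mul1r mulr0n addr0.
rewrite exprSr mulrA IHj mulrDl -mulrA jordan_relE mulrDr mulrA -exprSr.
by rewrite mulrnAl -exprSr -exprD addn2 -addrA mulrS.
Qed.

End JordanPlane.

Section JordanBinomial.

Variable K : pzRingType.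
Variable A : algType K.
Variables a b : A.
Hypothesis hab : jordan_rel a b.

Lemma jordan_mul_monomial (x : K) (j n : nat) :
  (a + x *: b) * (b ^+ j * a ^+ n) =
  b ^+ j * a ^+ n.+1 + (x + j%:R) *: (b ^+ j.+1 * a ^+ n).
Proof.
rewrite mulrDl (mulrA a) (jordan_mul_expr hab) mulrDl -mulrA -exprS.
rewrite -scalerAl (mulrA b) -exprS mulrnAl -scaler_nat scalerDl -addrA.
by rewrite [_ *: _ + _]addrC.
Qed.

Lemma jordan_binomial (x : K) (p : nat) :
  (a + x *: b) ^+ p =
  \sum_(j < p.+1) (gamma j x *+ 'C(p, j)) *: (b ^+ j * a ^+ (p - j)).
Proof.
elim: p => [|p IHp].
  by rewrite big_ord1 expr0 /gamma big_ord0 !expr0 mulr1 scale1r.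
rewrite exprS IHp mulr_sumr.
under eq_bigr => j _ do rewrite -scalerAr jordan_mul_monomial scalerDr scalerA.
rewrite big_split /= [RHS]big_ord_recl /=.
(* Pascal's rule splits the target into the terms b^j a^(p+1-j) and b^(j+1) a^(p-j). *)
under [X in _ = _ + X]eq_bigr => j _ do rewrite binS mulrnDr scalerDl.
rewrite big_split /= addrA; congr (_ + _).
- rewrite big_ord_recl [X in _ = _ + X]big_ord_recr /= (bin_small (ltnSn p)).
  rewrite mulr0n scale0r addr0 !subn0 !bin0; congr (_ + _).
  by apply: eq_bigr => j _; rewrite /bump /= subSS -subSn ?ltn_ord // add1n.
- apply: eq_bigr => j _; rewrite /bump /= add1n gammaS subSS -mulrnAl.
  by congr (_ *: _).
Qed.

End JordanBinomial.

Theorem corollary1p1p2 (R : realType) (A : algType (complex R)) (a b : A)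
  (hab : jordan_rel a b) (x : complex R) (p : nat) :
  (a + x *: b) ^+ p =
  \sum_(j < p.+1) (gamma j x *+ 'C(p, j)) *: (b ^+ j * a ^+ (p - j)).
Proof. exact: jordan_binomial. Qed.
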